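(* Let $\lambda=2\cos(\pi/5)$, $\pi=\lambda+2$, and work in $GL(2,\mathbb Z[\lambda]/5\mathbb Z[\lambda])$. Let $$a=I+\pi\begin{pmatrix}4&0\\4&1\end{pmatrix},\quad b=I+\pi\begin{pmatrix}1&1\\0&4\end{pmatrix},\quad c=I+\pi\begin{pmatrix}1&4\\0&4\end{pmatrix}$$ (entries taken modulo $5$), and let $\Delta=\{a,b,c\}$. Let $S=\begin{pmatrix}0&1\\-1&0\end{pmatrix}$, $T=\begin{pmatrix}1&\lambda\\0&1\end{pmatrix}$, $J=\begin{pmatrix}0&1\\1&0\end{pmatrix}$ (reduced modulo $5$). Then the only nontrivial subgroup of $\langle\Delta\rangle$ that is invariant under conjugation by each of $S$, $T$ and $J$ is $\langle\Delta\rangle$ itself.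
   Context: $\lambda=2\cos(\pi/5)$ satisfies $\lambda^2=\lambda+1$; $\mathbb Z[\lambda]$ is the ring of integers of $\mathbb Q(\sqrt5)$, and $5=(\lambda+2)^2\lambda^{-2}$ in $\mathbb Z[\lambda]$. *)

From HB Require Import structures.
From mathcomp Require Import all_boot all_order all_algebra all_fingroup.
From mathcomp Require Import ring.
Set Implicit Arguments. Unset Strict Implicit. Unset Printing Implicit Defensive.
Import GRing.Theory.
Local Open Scope ring_scope.

(* Z[lambda]/5Z[lambda] = F_5[x]/(x^2 - x - 1); ZL u v stands for u + v*lambda *)
Inductive zl5 := ZL of 'F_5 & 'F_5.
Definition zl_pair (x : zl5) := let: ZL u v := x in (u, v).
Definition pair_zl (p : 'F_5 * 'F_5) := ZL p.1 p.2.
Lemma zl_pairK : cancel zl_pair pair_zl. Proof. by case. Qed.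
HB.instance Definition _ := Finite.copy zl5 (can_type zl_pairK).

Definition zl_zero := ZL 0 0.
Definition zl_opp (x : zl5) := let: ZL u v := x in ZL (- u) (- v).
Definition zl_add (x y : zl5) :=
  let: ZL u v := x in let: ZL u' v' := y in ZL (u + u') (v + v').
Lemma zl_addA : associative zl_add.
Proof. by case=> ? ? [? ?] [? ?] /=; rewrite !addrA. Qed.
Lemma zl_addC : commutative zl_add.
Proof. by case=> ? ? [? ?] /=; rewrite [_ + _]addrC [X in ZL _ X]addrC. Qed.
Lemma zl_add0 : left_id zl_zero zl_add.
Proof. by case=> ? ? /=; rewrite !add0r. Qed.
Lemma zl_addN : left_inverse zl_zero zl_opp zl_add.
Proof. by case=> ? ? /=; rewrite !addNr. Qed.
HB.instance Definition _ := GRing.isZmodule.Build zl5 zl_addA zl_addC zl_add0 zl_addN.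

Definition zl_one := ZL 1 0.
(* (u + v l)(u' + v' l) with l^2 = l + 1 *)
Definition zl_mul (x y : zl5) :=
  let: ZL u v := x in let: ZL u' v' := y in
  ZL (u * u' + v * v') (u * v' + v * u' + v * v').
Lemma zl_mulA : associative zl_mul.
Proof. by case=> ? ? [? ?] [? ?] /=; congr ZL; ring. Qed.
Lemma zl_mulC : commutative zl_mul.
Proof. by case=> ? ? [? ?] /=; congr ZL; ring. Qed.
Lemma zl_mul1 : left_id zl_one zl_mul.
Proof. by case=> ? ? /=; congr ZL; ring. Qed.
Lemma zl_mulDl : left_distributive zl_mul zl_add.
Proof. by case=> ? ? [? ?] [? ?] /=; congr ZL; ring. Qed.
Lemma zl_one_neq0 : zl_one != zl_zero. Proof. by []. Qed.
HB.instance Definition _ := GRing.Zmodule_isComNzRing.Build zl5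
  zl_mulA zl_mulC zl_mul1 zl_mulDl zl_one_neq0.

Definition zl_norm (x : zl5) : 'F_5 := let: ZL u v := x in u * u + u * v - v * v.
Definition zl_unit : pred zl5 := fun x => zl_norm x != 0.
Definition zl_inv (x : zl5) :=
  if zl_unit x then let: ZL u v := x in ZL ((u + v) / zl_norm x) (- v / zl_norm x)
  else x.
Lemma zl_mulV : {in zl_unit, left_inverse 1 zl_inv *%R}.
Proof.
case=> u v nz; have nz' : zl_unit (ZL u v) := nz.
rewrite /zl_inv nz'; move: nz'; rewrite /zl_unit /= => nz'.
by congr ZL; field.
Qed.
Lemma zl_normM x y : zl_norm (x * y) = zl_norm x * zl_norm y.
Proof. by case: x y => ? ? [? ?] /=; ring. Qed.
Lemma zl_unitPl x y : y * x = 1 -> zl_unit x.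
Proof.
move=> /(congr1 zl_norm); rewrite zl_normM /zl_unit => h.
by apply/eqP => h0; move: h; rewrite h0 mulr0.
Qed.
Lemma zl_inv_out : {in [predC zl_unit], zl_inv =1 id}.
Proof. move=> x; rewrite inE /zl_inv; case: ifP => // u /negP[]; exact: u. Qed.
HB.instance Definition _ := GRing.ComNzRing_hasMulInverse.Build zl5
  zl_mulV zl_unitPl zl_inv_out.


Definition lam : zl5 := ZL 0 1.
Definition piz : zl5 := lam + 2%:R.

Definition mx22 (p q r s : zl5) : 'M[zl5]_2 :=
  \matrix_(i < 2, j < 2)
    if i == 0 :> nat then (if j == 0 :> nat then p else q)
    else (if j == 0 :> nat then r else s).

Definition Ma : 'M[zl5]_2 := 1%:M + piz *: mx22 4%:R 0 4%:R 1.
Definition Mb : 'M[zl5]_2 := 1%:M + piz *: mx22 1 1 0 4%:R.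
Definition Mc : 'M[zl5]_2 := 1%:M + piz *: mx22 1 4%:R 0 4%:R.
Definition MS : 'M[zl5]_2 := mx22 0 1 (-1) 0.
Definition MT : 'M[zl5]_2 := mx22 1 lam 0 1.
Definition MJ : 'M[zl5]_2 := mx22 0 1 1 0.

Lemma mx22_mul p q r s p' q' r' s' :
  mx22 p q r s *m mx22 p' q' r' s' =
  mx22 (p * p' + q * r') (p * q' + q * s') (r * p' + s * r') (r * q' + s * s').
Proof.
apply/matrixP => i j; rewrite !mxE !big_ord_recr big_ord0 /= !mxE /= add0r.
by case: i => [[|[|//]] ?]; case: j => [[|[|//]] ?].
Qed.

Lemma mx22_1 : 1%:M = mx22 1 0 0 1.
Proof.
by apply/matrixP => i j; rewrite !mxE; case: i => [[|[|//]] ?]; case: j => [[|[|//]] ?].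
Qed.

Lemma mx22_aff c p q r s :
  1%:M + c *: mx22 p q r s = mx22 (1 + c * p) (c * q) (c * r) (1 + c * s).
Proof.
apply/matrixP => i j; rewrite !mxE.
by case: i => [[|[|//]] ?]; case: j => [[|[|//]] ?]; rewrite /= ?add0r ?addr0.
Qed.

Lemma unit22 p q r s p' q' r' s' :
  p * p' + q * r' = 1 -> p * q' + q * s' = 0 ->
  r * p' + s * r' = 0 -> r * q' + s * s' = 1 ->
  mx22 p q r s \in unitmx.
Proof.
move=> h1 h2 h3 h4; have := @mulmx1_unit _ _ (mx22 p q r s) (mx22 p' q' r' s').
by rewrite mx22_mul h1 h2 h3 h4 -mx22_1 => /(_ erefl) [].
Qed.

Ltac solve22 := apply/eqP; vm_compute; reflexivity.

Lemma Ma_unit : Ma \in unitmx.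
Proof.
rewrite /Ma mx22_aff; apply: (@unit22 _ _ _ _ (1 - piz * 4%:R) 0 (- (piz * 4%:R)) (1 - piz));
  solve22.
Qed.
Lemma Mb_unit : Mb \in unitmx.
Proof.
rewrite /Mb mx22_aff; apply: (@unit22 _ _ _ _ (1 - piz) (- piz) 0 (1 - piz * 4%:R));
  solve22.
Qed.
Lemma Mc_unit : Mc \in unitmx.
Proof.
rewrite /Mc mx22_aff; apply: (@unit22 _ _ _ _ (1 - piz) (- (piz * 4%:R)) 0 (1 - piz * 4%:R));
  solve22.
Qed.
Lemma MS_unit : MS \in unitmx.
Proof. by apply: (@unit22 _ _ _ _ 0 (-1) 1 0); solve22. Qed.
Lemma MT_unit : MT \in unitmx.
Proof. by apply: (@unit22 _ _ _ _ 1 (- lam) 0 1); solve22. Qed.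
Lemma MJ_unit : MJ \in unitmx.
Proof. by apply: (@unit22 _ _ _ _ 0 1 1 0); solve22. Qed.

Definition GL2 := {'GL_2[zl5]}.
Definition ga : GL2 := Sub Ma Ma_unit.
Definition gb : GL2 := Sub Mb Mb_unit.
Definition gc : GL2 := Sub Mc Mc_unit.
Definition gS : GL2 := Sub MS MS_unit.
Definition gT : GL2 := Sub MT MT_unit.
Definition gJ : GL2 := Sub MJ MJ_unit.

Definition Delta : {set GL2} := [set ga; gb; gc].

(* Since pi^2 = 5 (lambda + 1) = 0, the matrices I + pi X, with X a trace-zero
   matrix over Z[lambda]/(pi) = F_5, form a group Gamma(pi) isomorphic to the
   additive group of sl_2(F_5) = F_5^3; a, b and c generate it, and conjugation
   by S, T and J acts on it through the adjoint action.  A nontrivial subgroup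
   of Gamma(pi) normalised by T and J is therefore a nonzero subspace of
   sl_2(F_5) stable under Ad T and Ad J.  As Ad T - 1 is nilpotent, it maps a
   nonzero vector to a nonzero multiple of the upper-right basis vector e2, and
   e2, Ad J e2 and (Ad T - 1)(Ad J e2) already span sl_2(F_5). *)

From mathcomp Require Import all_boot all_order all_algebra all_fingroup.
From mathcomp Require Import ring.
Set Implicit Arguments. Unset Strict Implicit. Unset Printing Implicit Defensive.
Import GRing.Theory.

Local Open Scope ring_scope.

Lemma mulmx_1addZ_sqr0 (R : comPzRingType) n (c : R) (A B : 'M[R]_n) :
  c * c = 0 -> (1%:M + c *: A) *m (1%:M + c *: B) = 1%:M + c *: (A + B).
Proof.
move=> c2; rewrite mulmxDl mulmxDr !mul1mx mulmxDr mulmx1 -scalemxAl -scalemxAr.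
by rewrite scalerA c2 scale0r addr0 scalerDr !addrA addrAC.
Qed.

(* (x, y, z) stands for the matrix [[x, y], [z, -x]] over F_5 = Z[lambda]/(pi);
   fT, fJ and fS are conjugation by T, J and S in these coordinates, using
   lambda = 3 modulo pi. *)
Definition sl2 := ('F_5 * 'F_5 * 'F_5)%type.

Definition e1 : sl2 := (1, 0, 0).
Definition e2 : sl2 := (0, 1, 0).
Definition e3 : sl2 := (0, 0, 1).

Lemma sl2_add (x y z x' y' z' : 'F_5) :
  (x, y, z) + (x', y', z') = (x + x', y + y', z + z') :> sl2.
Proof. by []. Qed.

Lemma sl2_coord (x y z : 'F_5) : (x, y, z) = e1 *+ x + e2 *+ y + e3 *+ z :> sl2.
Proof.
rewrite !pairMnE /= !mul0rn !natr_Zp.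
by rewrite -[RHS]/(x + 0 + 0, 0 + y + 0, 0 + 0 + z) !(addr0, add0r).
Qed.

Definition fT (v : sl2) : sl2 := let: (x, y, z) := v in (x + 2%:R * z, x + y + z, z).
Definition fJ (v : sl2) : sl2 := let: (x, y, z) := v in (- x, z, y).
Definition fS (v : sl2) : sl2 := let: (x, y, z) := v in (- x, - z, - y).

Lemma fT_add v w : fT (v + w) = fT v + fT w.
Proof.
case: v w => [[x y] z] [[x' y'] z']; rewrite sl2_add /= sl2_add.
by congr (_, _, _); ring.
Qed.

Lemma fJ_add v w : fJ (v + w) = fJ v + fJ w.
Proof. by case: v w => [[x y] z] [[x' y'] z']; rewrite sl2_add /= sl2_add opprD. Qed.

Lemma fS_add v w : fS (v + w) = fS v + fS w.
Proof. by case: v w => [[x y] z] [[x' y'] z']; rewrite sl2_add /= sl2_add !opprD. Qed.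

Lemma fT_subE (x y z : 'F_5) : fT (x, y, z) - (x, y, z) = (2%:R * z, x + z, 0).
Proof.
rewrite -[LHS]/(x + 2%:R * z - x, x + y + z - y, z - z).
by congr (_, _, _); ring.
Qed.

Lemma fJ_e2 : fJ e2 = e3.
Proof. by apply/eqP. Qed.

Lemma e1_fT_e3 : e1 = (fT e3 - e3 - e2) *+ 3.
Proof. by apply/eqP. Qed.

Definition va : sl2 := (4%:R, 0, 4%:R).
Definition vb : sl2 := (1, 1, 0).
Definition vc : sl2 := (1, 4%:R, 0).

Lemma sl2_basis_abc :
  [/\ e1 = va *+ 0 + vb *+ 3 + vc *+ 3, e2 = va *+ 0 + vb *+ 3 + vc *+ 2
    & e3 = va *+ 4 + vb *+ 2 + vc *+ 2].
Proof. by split; apply/eqP. Qed.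

Section TJInvariantSubgroup.

Variable V : {set sl2}.
Hypotheses (V0 : 0 \in V) (VB : {in V &, forall v w, v - w \in V}).
Hypotheses (VT : {in V, forall v, fT v \in V}) (VJ : {in V, forall v, fJ v \in V}).

Lemma invariantD v w : v \in V -> w \in V -> v + w \in V.
Proof. by move=> Vv Vw; have := VB Vv (VB V0 Vw); rewrite sub0r opprK. Qed.

Lemma invariantMn v n : v \in V -> v *+ n \in V.
Proof. by move=> Vv; elim: n => [|n IHn]; rewrite ?mulr0n // mulrS invariantD. Qed.

Lemma invariant_fT_sub v : v \in V -> fT v - v \in V.
Proof. by move=> Vv; rewrite VB ?VT. Qed.

(* fT - 1 maps (x, y, z) to (2z, x + z, 0) and then to (0, 2z, 0): the last
   nonzero vector among v, (fT - 1) v, (fT - 1)^2 v lies on the line of e2. *)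
Lemma invariant_e2 v : v != 0 -> v \in V -> e2 \in V.
Proof.
case: v => [[x y] z] v_neq0 Vv.
suff [c c_neq0 Vc] : exists2 c : 'F_5, c != 0 & (0, c, 0) \in V.
  have -> : e2 = (0, c, 0) *+ c^-1.
    by rewrite !pairMnE /= !mul0rn -mulr_natr natr_Zp mulfV.
  exact: invariantMn.
have V1 := invariant_fT_sub Vv; rewrite fT_subE in V1.
have V2 := invariant_fT_sub V1; rewrite fT_subE mulr0 addr0 in V2.
have [z0 | z_neq0] := eqVneq z 0; last by exists (2%:R * z); rewrite ?mulf_neq0.
have [x0 | x_neq0] := eqVneq x 0.
  move: v_neq0 Vv; rewrite x0 z0 => v_neq0 Vv.
  by exists y => //; apply: contraNneq v_neq0 => ->.
by exists x => //; move: V1; rewrite z0 mulr0 addr0.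
Qed.

Lemma invariant_full v : v != 0 -> v \in V -> forall w, w \in V.
Proof.
move=> v_neq0 Vv [[x y] z].
have Ve2 := invariant_e2 v_neq0 Vv.
have Ve3 : e3 \in V by rewrite -fJ_e2 VJ.
have Ve1 : e1 \in V.
  by rewrite e1_fT_e3; apply: invariantMn; rewrite VB ?invariant_fT_sub.
by rewrite sl2_coord; apply: invariantD; [apply: invariantD |]; apply: invariantMn.
Qed.

End TJInvariantSubgroup.

Section Sl2Morphism.

Local Open Scope group_scope.

Variables (rT : finGroupType) (phi : sl2 -> rT).
Hypothesis phiD : {morph phi : v w / (v + w)%R >-> v * w}.

Lemma sl2_morph1 : phi 0%R = 1.
Proof. by apply: (mulgI (phi 0%R)); rewrite -phiD addr0 mulg1. Qed.

Lemma sl2_morphV v : phi (- v)%R = (phi v)^-1.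
Proof. by apply: (mulgI (phi v)); rewrite mulgV -phiD subrr sl2_morph1. Qed.

Lemma sl2_morphX v n : phi (v *+ n)%R = phi v ^+ n.
Proof. by elim: n => [|n IHn]; rewrite ?mulr0n ?sl2_morph1 // mulrS phiD IHn expgS. Qed.

Lemma sl2_morph_coord (x y z : 'F_5) :
  phi (x, y, z) = phi e1 ^+ x * phi e2 ^+ y * phi e3 ^+ z.
Proof. by rewrite sl2_coord !phiD !sl2_morphX. Qed.

Lemma sl2_morph_im_group : group_set (phi @: [set: sl2]).
Proof.
apply/group_setP; split; first by apply/imsetP; exists 0%R; rewrite ?sl2_morph1.
by move=> _ _ /imsetP[v _ ->] /imsetP[w _ ->]; rewrite -phiD imset_f.
Qed.

Lemma sl2_morph_im_sub (G : {group rT}) :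
  phi va \in G -> phi vb \in G -> phi vc \in G -> phi @: [set: sl2] \subset G.
Proof.
move=> Ga Gb Gc; have Gabc i j k : phi (va *+ i + vb *+ j + vc *+ k)%R \in G.
  by rewrite !phiD !sl2_morphX; apply: groupM; [apply: groupM |]; apply: groupX.
apply/subsetP => _ /imsetP[[[x y] z] _ ->].
rewrite sl2_morph_coord; have [-> -> ->] := sl2_basis_abc.
by apply: groupM; [apply: groupM |]; apply: groupX.
Qed.

Lemma sl2_morph_im_norm (g : rT) (f : sl2 -> sl2) :
  (forall v, phi v ^ g = phi (f v)) -> g \in 'N(phi @: [set: sl2]).
Proof.
move=> phiJ; rewrite inE; apply/subsetP => _ /imsetP[_ /imsetP[v _ ->] ->].
by rewrite phiJ imset_f.
Qed.

Lemma sl2_morph_im_minimal (H : {group rT}) (t j : rT) :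
    (forall v, phi v ^ t = phi (fT v)) -> (forall v, phi v ^ j = phi (fJ v)) ->
    H \subset phi @: [set: sl2] -> H :!=: 1 -> t \in 'N(H) -> j \in 'N(H) ->
  H :=: phi @: [set: sl2].
Proof.
move=> phiT phiJ sH_im /trivgPn[h Hh h_neq1] nHt nHj.
have /imsetP[v _ h_phiv] := subsetP sH_im h Hh.
apply/eqP; rewrite eqEsubset sH_im; apply/subsetP => _ /imsetP[w _ ->].
suff: w \in [set u | phi u \in H] by rewrite inE.
apply: (@invariant_full _ _ _ _ _ v); rewrite ?inE -?h_phiv //.
- by rewrite sl2_morph1 group1.
- by move=> u u'; rewrite !inE phiD sl2_morphV => Hu Hu'; rewrite groupM ?groupV.
- by move=> u; rewrite !inE -phiT memJ_norm.
- by move=> u; rewrite !inE -phiJ memJ_norm.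
- by apply: contraNneq h_neq1 => v0; rewrite h_phiv v0 sl2_morph1.
Qed.

End Sl2Morphism.

Definition slmx (v : sl2) : 'M[zl5]_2 :=
  let: (x, y, z) := v in mx22 (ZL x 0) (ZL y 0) (ZL z 0) (ZL (- x) 0).

Lemma mx22D p q r s p' q' r' s' :
  mx22 p q r s + mx22 p' q' r' s' = mx22 (p + p') (q + q') (r + r') (s + s').
Proof.
by apply/matrixP => i j; rewrite !mxE; case: i => [[|[|//]] ?]; case: j => [[|[|//]] ?].
Qed.

Lemma ZL0D (x y : 'F_5) : ZL (x + y) 0 = ZL x 0 + ZL y 0.
Proof. by rewrite -[RHS]/(ZL (x + y) (0 + 0)) addr0. Qed.

Lemma slmxD v w : slmx (v + w) = slmx v + slmx w.
Proof. by case: v w => [[x y] z] [[x' y'] z']; rewrite /= mx22D opprD !ZL0D. Qed.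

Lemma slmx0 : slmx 0 = 0.
Proof.
apply/matrixP => i j; rewrite /= !mxE oppr0.
by case: i => [[|[|//]] ?]; case: j => [[|[|//]] ?].
Qed.

(* pi^2 = 5 (lambda + 1) *)
Lemma piz_sqr : piz * piz = 0.
Proof. by apply/eqP; vm_compute. Qed.

Definition congmx (v : sl2) : 'M[zl5]_2 := 1%:M + piz *: slmx v.

Lemma congmxD v w : congmx (v + w) = congmx v *m congmx w.
Proof. by rewrite mulmx_1addZ_sqr0 ?piz_sqr // /congmx slmxD. Qed.

Lemma congmx_unit v : congmx v \in unitmx.
Proof.
have : congmx v *m congmx (- v) = 1%:M.
  by rewrite -congmxD subrr /congmx slmx0 scaler0 addr0.
by case/mulmx1_unit.
Qed.

Definition cong (v : sl2) : GL2 := Sub (congmx v) (congmx_unit v).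

Lemma congD : {morph cong : v w / v + w >-> (v * w)%g}.
Proof. by move=> v w; apply: val_inj; exact: congmxD. Qed.

Definition Gamma_pi : {set GL2} := cong @: [set: sl2].

Lemma Gamma_pi_group_set : group_set Gamma_pi.
Proof. exact: sl2_morph_im_group congD. Qed.
Canonical Gamma_pi_group := Group Gamma_pi_group_set.

Local Ltac congmx_check :=
  move=> e; rewrite !inE => /or3P[]/eqP->;
  rewrite /congmx /= ?/MT ?/MJ ?/MS !mx22_aff !mx22_mul; congr mx22; solve22.

Local Open Scope group_scope.

Lemma cong_conjg (g : GL2) (f : sl2 -> sl2) :
    {morph f : v w / (v + w)%R} ->
    {in [:: e1; e2; e3], forall e, congmx e *m val g = val g *m congmx (f e)}%R ->
  forall v, cong v ^ g = cong (f v).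
Proof.
move=> fD fe [[x y] z].
have conj_e e : e \in [:: e1; e2; e3] -> cong e ^ g = cong (f e).
  by move=> /fe ge; apply: (mulgI g); rewrite -conjgC; apply: val_inj.
have conjD : {morph (fun v => cong v ^ g) : v w / (v + w)%R >-> v * w}.
  by move=> v w /=; rewrite congD conjMg.
have fconjD : {morph (fun v => cong (f v)) : v w / (v + w)%R >-> v * w}.
  by move=> v w /=; rewrite fD congD.
rewrite (sl2_morph_coord conjD) (sl2_morph_coord fconjD) /=.
by rewrite !conj_e ?inE ?eqxx ?orbT.
Qed.

Lemma cong_conjT v : cong v ^ gT = cong (fT v).
Proof. by apply: cong_conjg fT_add _ v; congmx_check. Qed.

Lemma cong_conjJ v : cong v ^ gJ = cong (fJ v).
Proof. by apply: cong_conjg fJ_add _ v; congmx_check. Qed.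

Lemma cong_conjS v : cong v ^ gS = cong (fS v).
Proof. by apply: cong_conjg fS_add _ v; congmx_check. Qed.

Lemma Delta_cong : [/\ ga = cong va, gb = cong vb & gc = cong vc].
Proof.
by split; apply: val_inj; rewrite /= /congmx /Ma /Mb /Mc /= !mx22_aff;
  congr mx22; solve22.
Qed.

Lemma gen_Delta : <<Delta>> = Gamma_pi.
Proof.
have [ga_v gb_v gc_v] := Delta_cong.
apply/eqP; rewrite eqEsubset gen_subG; apply/andP; split.
  apply/subsetP => g; rewrite !inE -orbA.
  by case/or3P=> /eqP->; rewrite ?ga_v ?gb_v ?gc_v imset_f.
apply: (sl2_morph_im_sub congD); rewrite -?ga_v -?gb_v -?gc_v;
  by apply: mem_gen; rewrite !inE eqxx ?orbT.
Qed.

Lemma ga_neq1 : ga != 1.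
Proof.
apply/eqP => /(congr1 (fun g : GL2 => val g 0 0)).
rewrite /= /Ma mx22_aff !mxE /=.
by move/eqP; vm_compute.
Qed.

Theorem lemmaB1 :
  [/\ <<Delta>> :!=: 1,
      [set gS; gT; gJ] \subset 'N(<<Delta>>) &
      forall H : {group GL2},
        H \subset <<Delta>> -> H :!=: 1 ->
        [set gS; gT; gJ] \subset 'N(H) ->
        H :=: <<Delta>>].
Proof.
rewrite gen_Delta; split.
- apply/trivgPn; exists ga; last exact: ga_neq1.
  by have [-> _ _] := Delta_cong; rewrite imset_f.
- by rewrite !subUset !sub1set (sl2_morph_im_norm cong_conjS)
    (sl2_morph_im_norm cong_conjT) (sl2_morph_im_norm cong_conjJ).
move=> H sH ntH nH.
by apply: (sl2_morph_im_minimal congD cong_conjT cong_conjJ sH ntH);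
  apply: (subsetP nH); rewrite !inE eqxx ?orbT.
Qed.
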